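(* Let $Q$ be a quadrilateral in $K^2$. The $Q$-pairs of bisectors of $Q$ are precisely the degenerations of the conics in the pencil of $Q$.
   Context: $K$ is a field of characteristic $\neq 2$; we work in $K^2$. Every line $L$ has an equation $tX-uY+v=0$ normalized so that $t=1$ if $u=0$ and $u=1$ if $u\neq 0$; coefficients denoted $t_L,u_L,v_L$. A quadrilateral $Q=ABA'B'$ consists of four distinct lines $A,B,A',B'$ (sides), not all through one point, with adjacent sides ($A,B$; $B,A'$; $A',B'$; $B',A$) not parallel; opposite sides ($A,A'$; $B,B'$) may be parallel. Vertices: $A\cap B$, $B\cap A'$, $A'\cap B'$, $B'\cap A$ (two may coincide if three sides are concurrent). The centroid of $Q$ is the average of the four vertices (equivalently the midpoint of the midpoints of the diagonals). Let $\alpha=t_Au_Bu_{A'}u_{B'}-u_At_Bu_{A'}u_{B'}+u_Au_Bt_{A'}u_{B'}-u_Au_Bu_{A'}t_{B'}$, $\beta=t_Au_Bt_{A'}u_{B'}-u_At_Bu_{A'}t_{B'}$, $\gamma=t_At_Bt_{A'}u_{B'}-t_At_Bu_{A'}t_{B'}+t_Au_Bt_{A'}t_{B'}-u_At_Bt_{A'}t_{B'}$, and $\langle \mathbf v,\mathbf w\rangle_Q=\mathbf v^T\begin{pmatrix}\gamma&-\beta\\-\beta&\alpha\end{pmatrix}\mathbf w$ on $K^2$. Lines $\ell_1,\ell_2$ are $Q$-orthogonal if $\langle (u_{\ell_1},t_{\ell_1}),(u_{\ell_2},t_{\ell_2})\rangle_Q=0$. A line $\ell$ crosses a pair $\{\ell_1,\ell_2\}$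 if distinct from both and not parallel to both; $\mathrm{mid}_{\{\ell_1,\ell_2\}}(\ell)$ is the midpoint of the points where $\ell$ meets $\ell_1,\ell_2$ (the point at infinity of $\ell$ if one is at infinity). $\ell$ bisects $Q$ (is a bisector of $Q$) if $\mathrm{mid}_{\mathsf P}(\ell)$ is the same for all pairs $\mathsf P$ among $\{A,A'\},\{B,B'\}$ that $\ell$ crosses; this common point is the midpoint of the bisector. A pair $\{\ell_1,\ell_2\}$ of bisectors (possibly $\ell_1=\ell_2$) is $Q$-antipodal if the midpoint of their midpoints is the centroid of $Q$, and is a $Q$-pair if it is $Q$-antipodal and $Q$-orthogonal. A conic is a quadratic polynomial in $K[X,Y]$. Let $f_1$ be a product of linear polynomials defining $A$ and $A'$, and $f_2$ a product of linear polynomials defining $B$ and $B'$. The pencil of $Q$ is $\{af_1+bf_2: a,b\in K \text{ not both } 0\}$. A pair of lines $\{\ell_1,\ell_2\}$ (possibly $\ell_1=\ell_2$) is a degeneration of a conic $f$ if there is $\lambda\in K$ such that the zero set of $f+\lambda$ is $\ell_1\cup\ell_2$. *)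

From HB Require Import structures.
From mathcomp Require Import all_boot all_order all_algebra.
Set Implicit Arguments. Unset Strict Implicit. Unset Printing Implicit Defensive.
Import Order.TTheory GRing.Theory.
Local Open Scope ring_scope.

Section Quad.
Variable K : fieldType.

(* A line of K^2 with normalized equation  t X - u Y + v = 0,
   where t = 1 if u = 0, and u = 1 if u <> 0. *)
Record line := Line {
  l_t : K; l_u : K; l_v : K;
  l_norm : ((l_u == 0) && (l_t == 1)) || (l_u == 1) }.

Definition point := (K * K)%type.

Definition on_line (l : line) (p : point) : Prop :=
  l_t l * p.1 - l_u l * p.2 + l_v l = 0.

Definition parallel (l1 l2 : line) : bool :=
  l_t l1 * l_u l2 - l_u l1 * l_t l2 == 0.

Definition meet (l1 l2 : line) : point :=
  let D := l_u l1 * l_t l2 - l_t l1 * l_u l2 in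
  ((l_v l1 * l_u l2 - l_u l1 * l_v l2) / D,
   (l_t l2 * l_v l1 - l_t l1 * l_v l2) / D).

Definition midpoint (p q : point) : point :=
  ((p.1 + q.1) / 2, (p.2 + q.2) / 2).

Definition quadrilateral (A B A' B' : line) : Prop :=
  [/\ A <> B, A <> A', A <> B' & B <> A'] /\ [/\ B <> B' & A' <> B'] /\
  ~ (exists p, [/\ on_line A p, on_line B p, on_line A' p & on_line B' p]) /\
  [/\ ~ parallel A B, ~ parallel B A', ~ parallel A' B' & ~ parallel B' A].

Definition centroid (A B A' B' : line) : point :=
  let v1 := meet A B in let v2 := meet B A' in
  let v3 := meet A' B' in let v4 := meet B' A in
  ((v1.1 + v2.1 + v3.1 + v4.1) / 4, (v1.2 + v2.2 + v3.2 + v4.2) / 4).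

Definition qalpha (A B A' B' : line) : K :=
  l_t A * l_u B * l_u A' * l_u B' - l_u A * l_t B * l_u A' * l_u B'
  + l_u A * l_u B * l_t A' * l_u B' - l_u A * l_u B * l_u A' * l_t B'.
Definition qbeta (A B A' B' : line) : K :=
  l_t A * l_u B * l_t A' * l_u B' - l_u A * l_t B * l_u A' * l_t B'.
Definition qgamma (A B A' B' : line) : K :=
  l_t A * l_t B * l_t A' * l_u B' - l_t A * l_t B * l_u A' * l_t B'
  + l_t A * l_u B * l_t A' * l_t B' - l_u A * l_t B * l_t A' * l_t B'.

Definition qform (A B A' B' : line) (v w : K * K) : K :=
  v.1 * (qgamma A B A' B' * w.1 - qbeta A B A' B' * w.2)
  + v.2 * (- qbeta A B A' B' * w.1 + qalpha A B A' B' * w.2).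

Definition Q_orthogonal (A B A' B' l1 l2 : line) : Prop :=
  qform A B A' B' (l_u l1, l_t l1) (l_u l2, l_t l2) = 0.

Definition crosses (l l1 l2 : line) : Prop :=
  [/\ l <> l1, l <> l2 & ~ (parallel l l1 /\ parallel l l2)].

(* mid_{l1,l2}(l): None stands for the point at infinity of l *)
Definition mid (l l1 l2 : line) : option point :=
  if parallel l l1 || parallel l l2 then None
  else Some (midpoint (meet l l1) (meet l l2)).

Definition bisects (A B A' B' l : line) : Prop :=
  crosses l A A' -> crosses l B B' -> mid l A A' = mid l B B'.

(* m is the midpoint of the bisector l: the common value of mid over the
   crossed pairs (l always crosses at least one pair of opposite sides) *)
Definition bisector_mid (A B A' B' l : line) (m : option point) : Prop :=
  (crosses l A A' /\ mid l A A' = m) \/ (crosses l B B' /\ mid l B B' = m).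

Definition Q_antipodal (A B A' B' l1 l2 : line) : Prop :=
  bisects A B A' B' l1 /\ bisects A B A' B' l2 /\
  exists m1 m2, [/\ bisector_mid A B A' B' l1 (Some m1),
                    bisector_mid A B A' B' l2 (Some m2) &
                    midpoint m1 m2 = centroid A B A' B'].

Definition Q_pair (A B A' B' l1 l2 : line) : Prop :=
  Q_antipodal A B A' B' l1 l2 /\ Q_orthogonal A B A' B' l1 l2.

Definition lin (l : line) (p : point) : K := l_t l * p.1 - l_u l * p.2 + l_v l.

Definition pencil_conic (A B A' B' : line) (a b : K) (p : point) : K :=
  a * (lin A p * lin A' p) + b * (lin B p * lin B' p).

Definition degeneration (f : point -> K) (l1 l2 : line) : Prop :=
  exists lam : K, forall p : point, f p + lam = 0 <-> (on_line l1 p \/ on_line l2 p).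

End Quad.

(* Restricted to a line l with parameter s, a conic G = a f1 + b f2 of the pencil
   is a polynomial of degree at most 2 in s, and the chord midpoints of {A, A'}
   and {B, B'} on l are read off from the two leading coefficients of f1 and f2
   along l.  Hence l bisects Q exactly when some conic of the pencil is constant
   along l.  For bisectors l1 and l2, the conic constant along l1 is, up to a
   scalar, the one whose quadratic part is e |-> det(d1, e) <d1, e>_Q, so
   Q-orthogonality makes it constant along l2 as well.  If l1 and l2 cross, their
   intersection is a centre of G and G - G(l1 /\ l2) = k l1 l2; if they are
   parallel, G only depends on a coordinate transverse to them and its linear
   coefficient is fixed by antipodality, the centroid of Q being a critical point
   of G.  Conversely, a factorisation G + lam = k l1 l2 gives the bisectors and
   orthogonality coefficientwise, and comparing it with b f2 (or a f1) on the
   sides A, A' (or B, B') gives antipodality; a zero set equal to l1 \/ l2 forces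
   such a factorisation. *)

From HB Require Import structures.
From mathcomp Require Import all_boot all_order all_algebra.
From mathcomp Require Import ring.
From Stdlib Require Import Classical.
Import GRing.Theory.
Local Open Scope ring_scope.
Set Implicit Arguments. Unset Strict Implicit. Unset Printing Implicit Defensive.

(* [K * K] is a zmodType but carries no [lmodType K] structure. *)
Definition scalev (K : fieldType) (s : K) (w : K * K) : K * K := (s * w.1, s * w.2).
Notation "s *v w" := (scalev s w) (at level 40).

Section Geometry.
Variable K : fieldType.
Hypothesis hK2 : (2 : K) != 0.
Implicit Types (l X Y : line K) (p q v w z d e : K * K) (a b c s r k lam : K).

(** * Lines of K^2 *)

Definition det d e : K := d.1 * e.2 - d.2 * e.1.

Definition lin0 l w : K := l_t l * w.1 - l_u l * w.2.
Definition dir l : K * K := (l_u l, l_t l).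
Definition base l : K * K := ((l_u l - 1) * l_v l, l_u l * l_v l).
Definition transv l : K * K := (1 - l_u l, l_u l).

Lemma eq_lincomb c {x y a b : K} : x = y -> a - b = c * (x - y) -> a = b.
Proof. by move=> ->; rewrite subrr mulr0 => /eqP; rewrite subr_eq0 => /eqP. Qed.
Arguments eq_lincomb c {x y a b}.

Lemma line_normP l : (l_u l = 0 /\ l_t l = 1) \/ l_u l = 1.
Proof. by case: l => t u v /= /orP [/andP [/eqP -> /eqP ->]|/eqP ->]; [left|right]. Qed.

Lemma eq_line l1 l2 :
  l_t l1 = l_t l2 -> l_u l1 = l_u l2 -> l_v l1 = l_v l2 -> l1 = l2.
Proof.
case: l1 l2 => t u v h [t' u' v' h'] /= ? ? ?; subst.
by rewrite (bool_irrelevance h h').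
Qed.

Lemma lin_add l p w : lin l (p + w) = lin l p + lin0 l w.
Proof. rewrite /lin /lin0 /=; ring. Qed.

Lemma lin_coords l p d e s r :
  lin l (p + s *v d + r *v e) = lin l p + s * lin0 l d + r * lin0 l e.
Proof. rewrite /lin /lin0 /=; ring. Qed.

Lemma lin0_add l w z : lin0 l (w + z) = lin0 l w + lin0 l z.
Proof. rewrite /lin0 /=; ring. Qed.

Lemma lin0_scale l s w : lin0 l (s *v w) = s * lin0 l w.
Proof. rewrite /lin0 /=; ring. Qed.

Lemma lin0E l w : lin0 l w = det w (dir l).
Proof. rewrite /lin0 /det /=; ring. Qed.

Lemma det_self d : det d d = 0.
Proof. by rewrite /det mulrC subrr. Qed.

Lemma det_dir l w : det (dir l) w = - lin0 l w.
Proof. rewrite /lin0 /det /=; ring. Qed.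

Lemma lin_base l : lin l (base l) = 0.
Proof. by rewrite /lin /base /=; case: (line_normP l) => [[-> ->]|->]; ring. Qed.

Lemma lin0_dir l : lin0 l (dir l) = 0.
Proof. rewrite /lin0 /=; ring. Qed.

Lemma lin0_transv l : lin0 l (transv l) != 0.
Proof.
rewrite /lin0 /transv /=; case: (line_normP l) => [[-> ->]|->].
- by rewrite subr0 !mulr0 subr0 mulr1 oner_eq0.
- by rewrite subrr mulr0 mulr1 sub0r oppr_eq0 oner_eq0.
Qed.

Lemma det_dir_transv l : det (dir l) (transv l) != 0.
Proof. by rewrite det_dir oppr_eq0 lin0_transv. Qed.

Lemma parallelE l X : parallel l X = (lin0 X (dir l) == 0).
Proof.
rewrite /parallel /lin0 /= -oppr_eq0; congr (_ == 0); ring.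
Qed.

Lemma parallel_sym l X : parallel l X = parallel X l.
Proof. by rewrite /parallel -oppr_eq0; congr (_ == 0); ring. Qed.

Lemma parallel_refl l : parallel l l.
Proof. by rewrite /parallel; apply/eqP; ring. Qed.

Lemma parallel_coefs l1 l2 :
  parallel l1 l2 -> l_t l1 = l_t l2 /\ l_u l1 = l_u l2.
Proof.
rewrite /parallel; case: (line_normP l1) => [[-> ->]|->];
  case: (line_normP l2) => [[-> ->]|->];
  rewrite ?mul1r ?mulr1 ?mul0r ?mulr0 ?subr0 ?sub0r ?oppr_eq0 ?oner_eq0 //.
by rewrite subr_eq0 => /eqP ->.
Qed.

Lemma parallel_dir l1 l2 : parallel l1 l2 -> dir l2 = dir l1.
Proof. by case/parallel_coefs; rewrite /dir => -> ->. Qed.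

Lemma parallel_lin l1 l2 p :
  parallel l1 l2 -> lin l2 p = lin l1 p + (l_v l2 - l_v l1).
Proof. by case/parallel_coefs; rewrite /lin => -> ->; ring. Qed.

Lemma parallel_of_lin0 l X Y :
  lin0 X (dir l) = 0 -> lin0 Y (dir l) = 0 -> parallel X Y.
Proof.
rewrite /lin0 /parallel /=; case: (line_normP l) => [[-> ->]|->] hX hY; apply/eqP.
- have uX : l_u X = 0 by apply: (eq_lincomb (-1) hX); ring.
  have uY : l_u Y = 0 by apply: (eq_lincomb (-1) hY); ring.
  by rewrite uX uY; ring.
- have tX : l_t X = l_u X * l_t l by apply: (eq_lincomb 1 hX); ring.
  have tY : l_t Y = l_u Y * l_t l by apply: (eq_lincomb 1 hY); ring.
  by rewrite tX tY; ring.
Qed.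

Lemma on_line_param l s : on_line l (base l + s *v dir l).
Proof.
by change (lin l (base l + s *v dir l) = 0); rewrite lin_add lin_base /lin0 /=; ring.
Qed.

Lemma on_lineP l p : on_line l p -> exists s, p = base l + s *v dir l.
Proof.
rewrite /on_line /base /dir; case: p => x y /=.
case: (line_normP l) => [[-> ->]|->] h.
- exists y; apply: injective_projections => /=; last by ring.
  by apply: (eq_lincomb 1 h); ring.
- exists x; apply: injective_projections => /=; first by ring.
  by apply: (eq_lincomb (-1) h); ring.
Qed.

Lemma line_param_inj l s s' : base l + s *v dir l = base l + s' *v dir l -> s = s'.
Proof.
move/addrI; rewrite /scalev /dir => -[h1 h2].
case: (line_normP l) => [[_ ht]|hu].
- by move: h2; rewrite ht !mulr1.
- by move: h1; rewrite hu !mulr1.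
Qed.

Lemma parallel_base_eq l X : parallel l X -> lin X (base l) = 0 -> l = X.
Proof.
case/parallel_coefs => ht hu h; apply: eq_line => //.
have h0 := lin_base l; move: h h0; rewrite /lin -ht -hu => h h0.
by apply: (eq_lincomb (-1) h); apply: (eq_lincomb 1 h0); ring.
Qed.

Lemma basis_coords d e p q : det d e != 0 -> exists s r, p = q + s *v d + r *v e.
Proof.
move=> hd; exists (det (p - q) e / det d e), (det d (p - q) / det d e).
case: p q hd => x y [x' y']; rewrite /det /= => hd.
by apply: injective_projections => /=; field.
Qed.

Definition meet_coord l X : K := - lin X (base l) / lin0 X (dir l).

Lemma meet_on l1 l2 :
  ~~ parallel l1 l2 -> lin l1 (meet l1 l2) = 0 /\ lin l2 (meet l1 l2) = 0.
Proof.
rewrite /parallel /lin /meet /= => hp.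
have hD : l_u l1 * l_t l2 - l_t l1 * l_u l2 != 0.
  by apply: contra hp => /eqP h; rewrite -oppr_eq0 -h; apply/eqP; ring.
by split; field.
Qed.

Lemma meet_uniq l1 l2 p :
  ~~ parallel l1 l2 -> lin l1 p = 0 -> lin l2 p = 0 -> meet l1 l2 = p.
Proof.
rewrite /parallel /lin /meet => hp h1 h2.
have hD : l_u l1 * l_t l2 - l_t l1 * l_u l2 != 0.
  by apply: contra hp => /eqP h; rewrite -oppr_eq0 -h; apply/eqP; ring.
case: p h1 h2 => x y /= h1 h2; congr pair; apply: (mulIf hD); rewrite mulfVK //.
- by apply: (eq_lincomb (l_u l2) h1); apply: (eq_lincomb (- l_u l1) h2); ring.
- by apply: (eq_lincomb (l_t l2) h1); apply: (eq_lincomb (- l_t l1) h2); ring.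
Qed.

Lemma meetC l1 l2 : ~~ parallel l1 l2 -> meet l2 l1 = meet l1 l2.
Proof.
move=> hp; have [h1 h2] := meet_on hp.
by apply: meet_uniq; rewrite // parallel_sym.
Qed.

Lemma meetE l X : ~~ parallel l X -> meet l X = base l + meet_coord l X *v dir l.
Proof.
rewrite parallelE => hp; apply: meet_uniq; rewrite ?parallelE //.
  by rewrite lin_add lin_base lin0_scale lin0_dir mulr0 addr0.
by rewrite lin_add lin0_scale /meet_coord; field.
Qed.

Lemma poly2_eq0 c2 c1 c0 : (forall s, c2 * s ^+ 2 + c1 * s + c0 = 0) ->
  [/\ c2 = 0, c1 = 0 & c0 = 0].
Proof.
move=> h; have h0 := h 0; have h1 := h 1; have hm := h (-1).
have E0 : c0 = 0 by rewrite -h0; ring.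
have E2 : 2 * c2 = 0 by apply: (eq_lincomb 1 h1); apply: (eq_lincomb 1 hm); rewrite E0; ring.
have {}E2 : c2 = 0 by move/eqP: E2; rewrite mulf_eq0 (negPf hK2) => /eqP.
by split => //; apply: (eq_lincomb 1 h1); rewrite E0 E2; ring.
Qed.

Lemma midpointE p q : midpoint p q = 2^-1 *v (p + q).
Proof. by rewrite /midpoint /scalev /=; congr pair; rewrite mulrC. Qed.

Lemma lin_midpoint l p q : lin l (midpoint p q) = (lin l p + lin l q) / 2.
Proof. by rewrite /lin /midpoint /=; field. Qed.

(** * A pair of lines restricted to a line *)

(* Quadratic part, derivative and polar form of p |-> lin X p * lin Y p. *)
Definition prod_quad X Y w : K := lin0 X w * lin0 Y w.
Definition prod_diff X Y p w : K := lin X p * lin0 Y w + lin Y p * lin0 X w.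
Definition prod_polar X Y w z : K := lin0 X w * lin0 Y z + lin0 X z * lin0 Y w.

Lemma prod_diffC X Y p w : prod_diff X Y p w = prod_diff Y X p w.
Proof. rewrite /prod_diff; ring. Qed.

Lemma prod_line X Y p w t :
  lin X (p + t *v w) * lin Y (p + t *v w) =
  prod_quad X Y w * t ^+ 2 + prod_diff X Y p w * t + lin X p * lin Y p.
Proof. rewrite /prod_quad /prod_diff /lin /lin0 /=; ring. Qed.

Lemma prod_quad_dir_eq0 l X Y :
  (prod_quad X Y (dir l) == 0) = parallel l X || parallel l Y.
Proof. by rewrite /prod_quad mulf_eq0 !parallelE. Qed.

Lemma meet_coord_sum l X Y : ~~ parallel l X -> ~~ parallel l Y ->
  meet_coord l X + meet_coord l Y =
  - prod_diff X Y (base l) (dir l) / prod_quad X Y (dir l).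
Proof.
by rewrite !parallelE /meet_coord /prod_diff /prod_quad => hX hY; field; rewrite hX hY.
Qed.

Lemma mid_chord l X Y : ~~ parallel l X -> ~~ parallel l Y ->
  mid l X Y = Some (base l +
    (- prod_diff X Y (base l) (dir l) / (2 * prod_quad X Y (dir l))) *v dir l).
Proof.
move=> hX hY; rewrite /mid (negPf hX) (negPf hY) midpointE !meetE //.
have -> : - prod_diff X Y (base l) (dir l) / (2 * prod_quad X Y (dir l)) =
    (meet_coord l X + meet_coord l Y) / 2 by rewrite meet_coord_sum // invfM; ring.
by congr Some; apply: injective_projections => /=; field.
Qed.

Lemma not_crosses_chord l X Y : ~ crosses l X Y ->
  prod_quad X Y (dir l) = 0 /\ prod_diff X Y (base l) (dir l) = 0.
Proof.
rewrite /prod_quad /prod_diff => hc.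
have [<-|hX] := classic (l = X); first by rewrite lin0_dir lin_base; split; ring.
have [<-|hY] := classic (l = Y); first by rewrite lin0_dir lin_base; split; ring.
have [[]|] := classic (parallel l X /\ parallel l Y); last by move=> h; case: hc.
by rewrite !parallelE => /eqP -> /eqP ->; split; ring.
Qed.

Lemma crosses_chord l X Y : crosses l X Y ->
  prod_quad X Y (dir l) != 0 \/ prod_diff X Y (base l) (dir l) != 0.
Proof.
case=> hX hY hXY; case: (boolP (prod_quad X Y (dir l) == 0)); last by left.
rewrite prod_quad_dir_eq0 => hp; right.
wlog pX : X Y hX hY hXY hp / parallel l X.
  move=> wl; case/orP: (hp) => p; first exact: wl.
  rewrite prod_diffC; apply: wl => //; last by rewrite orbC.
  by case=> ? ?; apply: hXY.
have nY : ~~ parallel l Y by apply/negP => pY; apply: hXY.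
rewrite /prod_diff (_ : lin0 X (dir l) = 0); last by apply/eqP; rewrite -parallelE.
rewrite mulr0 addr0 mulf_neq0 -?parallelE //.
by apply/eqP => /(parallel_base_eq pX).
Qed.

Lemma prod_diff_on X Y p : lin X p = 0 -> prod_diff X Y p (dir X) = 0.
Proof. by rewrite /prod_diff lin0_dir => ->; ring. Qed.

Lemma prod_diff_chord_midpoint X Y Y' v w :
  lin X v = 0 -> lin X w = 0 -> lin Y v = 0 -> lin Y' w = 0 ->
  prod_diff Y Y' (midpoint v w) (dir X) = 0.
Proof.
move=> /on_lineP [s ->] /on_lineP [t ->].
rewrite !lin_add !lin0_scale => hv hw.
apply: (eq_lincomb (lin0 Y' (dir X)) hv).
apply: (eq_lincomb (lin0 Y (dir X)) hw).
by rewrite /prod_diff !lin_midpoint !lin_add !lin0_scale; field.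
Qed.

Lemma prod_quad_dir_neq0 l X Y :
  prod_quad X Y (dir l) != 0 -> ~~ parallel l X /\ ~~ parallel l Y.
Proof. by rewrite prod_quad_dir_eq0 negb_or => /andP. Qed.

Lemma mid_eq_None l X Y : mid l X Y = None <-> prod_quad X Y (dir l) = 0.
Proof.
rewrite /mid -prod_quad_dir_eq0; case: ifP => [/eqP h|h]; first by [].
by split=> // /eqP; rewrite h.
Qed.

Lemma mid_eq_chord l X Y X' Y' :
  prod_quad X Y (dir l) != 0 -> prod_quad X' Y' (dir l) != 0 ->
  (mid l X Y = mid l X' Y' <->
   prod_quad X Y (dir l) * prod_diff X' Y' (base l) (dir l) =
   prod_quad X' Y' (dir l) * prod_diff X Y (base l) (dir l)).
Proof.
move=> hH hH'; have [hX hY] := prod_quad_dir_neq0 hH.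
have [hX' hY'] := prod_quad_dir_neq0 hH'.
rewrite !mid_chord //; split=> [/Some_inj/line_param_inj/eqP | h].
- rewrite eqr_div ?(mulf_neq0 hK2) // => /eqP; move/eqP; rewrite -subr_eq0 => /eqP h.
  by apply: (mulfI hK2); apply: (eq_lincomb 1 h); ring.
- have h0 : prod_quad X Y (dir l) * prod_diff X' Y' (base l) (dir l) -
    prod_quad X' Y' (dir l) * prod_diff X Y (base l) (dir l) = 0 by rewrite h subrr.
  congr Some; congr (_ + _ *v _); apply/eqP; rewrite eqr_div ?(mulf_neq0 hK2) //.
  by apply/eqP; apply: (eq_lincomb 2 h0); ring.
Qed.

(* On l the chord cut by {X, Y} has midpoint parameter -prod_diff / (2 prod_quad),
   and its midpoint is at infinity exactly when prod_quad = 0, so both cases of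
   [bisects] merge into one cross-multiplied identity. *)
Lemma bisectsP A B A' B' l :
  bisects A B A' B' l <->
  prod_quad A A' (dir l) * prod_diff B B' (base l) (dir l) =
  prod_quad B B' (dir l) * prod_diff A A' (base l) (dir l).
Proof.
split=> [hb | h cA cB].
- have [cA|/not_crosses_chord [-> ->]] := classic (crosses l A A'); last by ring.
  have [cB|/not_crosses_chord [-> ->]] := classic (crosses l B B'); last by ring.
  have hm := hb cA cB.
  have [hA|hA] := eqVneq (prod_quad A A' (dir l)) 0.
    by move/mid_eq_None: (hA); rewrite hm => /mid_eq_None ->; rewrite hA; ring.
  have hB : prod_quad B B' (dir l) != 0.
    by apply/eqP => /mid_eq_None; rewrite -hm => /mid_eq_None /eqP; rewrite (negPf hA).
  exact/(mid_eq_chord hA hB).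
- have [hA|hA] := eqVneq (prod_quad A A' (dir l)) 0.
    have hDA : prod_diff A A' (base l) (dir l) != 0.
      by case: (crosses_chord cA) => //; rewrite hA eqxx.
    have hB : prod_quad B B' (dir l) = 0.
      by apply/eqP; move: h; rewrite hA mul0r => /esym/eqP; rewrite mulf_eq0 (negPf hDA) orbF.
    by rewrite (proj2 (mid_eq_None _ _ _) hA) (proj2 (mid_eq_None _ _ _) hB).
  have hB : prod_quad B B' (dir l) != 0.
    apply/eqP => hB; case: (crosses_chord cB) => [|hDB]; first by rewrite hB eqxx.
    by move: h; rewrite hB mul0r => /eqP; rewrite mulf_eq0 (negPf hA) (negPf hDB).
  exact/(mid_eq_chord hA hB).
Qed.

Lemma dot0_proportional a b x y : a != 0 \/ b != 0 -> x != 0 \/ y != 0 ->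
  a * x + b * y = 0 -> exists2 c, c != 0 & a = c * y /\ b = - (c * x).
Proof.
move=> hab hxy h; have [hx|hx] := eqVneq x 0.
- have hy : y != 0 by case: hxy => //; rewrite hx eqxx.
  have hb : b = 0.
    by apply/eqP; move: h; rewrite hx mulr0 add0r => /eqP; rewrite mulf_eq0 (negPf hy) orbF.
  have ha : a != 0 by case: hab => //; rewrite hb eqxx.
  exists (a / y); first by rewrite mulf_neq0 ?invr_eq0.
  by split; [field | rewrite hx hb; ring].
- have hb : b != 0.
    apply/eqP => hb; case: hab => [ha|]; last by rewrite hb eqxx.
    by move/eqP: h; rewrite hb mul0r addr0 mulf_eq0 (negPf ha) (negPf hx).
  exists (- b / x); first by rewrite mulf_neq0 ?oppr_eq0 ?invr_eq0.
  split; last by field.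
  by apply: (mulIf hx); apply: (eq_lincomb 1 h); field.
Qed.

(* A conic constant along d, written in coordinates P + s d + r n, whose zero set
   is the pair of parallel lines r m = 0 and r m + g = 0. *)
Lemma line_pair_roots c1 c2 h m g : m != 0 -> h != 0 \/ c2 != 0 ->
  (forall s r, r * c1 + s * r * h + r ^+ 2 * c2 = 0 <-> r * m = 0 \/ r * m + g = 0) ->
  h = 0 /\ m * c1 = g * c2.
Proof.
move=> hm hc hz.
have h0 : h = 0.
  apply/eqP/negP => /negP hh.
  have root r : r != 0 -> r * m + g = 0.
    move=> hr; have [|/eqP|//] := proj1 (hz (- (c1 + r * c2) / h) r); first by field.
    by rewrite mulf_eq0 (negPf hr) (negPf hm).
  have h1 := root 1 (oner_neq0 _).
  have h2 : -1 * m + g = 0 by apply: root; rewrite oppr_eq0 oner_eq0.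
  have : 2 * m = 0 by apply: (eq_lincomb 1 h1); apply: (eq_lincomb (-1) h2); ring.
  by move/eqP; rewrite mulf_eq0 (negPf hK2) (negPf hm).
have hc2 : c2 != 0 by case: hc => //; rewrite h0 eqxx.
split=> //; set r0 := - c1 / c2.
have [|/eqP|e] := proj1 (hz 0 r0); first by rewrite /r0; field.
- rewrite mulf_eq0 (negPf hm) orbF /r0 mulf_eq0 invr_eq0 (negPf hc2) orbF oppr_eq0.
  move/eqP=> c10; rewrite c10 mulr0.
  have /eqP : (- g / m) ^+ 2 * c2 = 0.
    have := proj2 (hz 0 (- g / m)); rewrite c10 h0 !mulr0 !add0r; apply.
    by right; field.
  rewrite mulf_eq0 (negPf hc2) orbF expf_eq0 /= mulf_eq0 invr_eq0 (negPf hm) orbF.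
  by rewrite oppr_eq0 => /eqP ->; rewrite mul0r.
- by apply: (eq_lincomb (- c2) e); rewrite /r0; field.
Qed.

Lemma side_meets_sum X Y Y' l1 l2 c lam k :
  c != 0 -> ~~ parallel X Y -> ~~ parallel X Y' ->
  (forall p, on_line X p ->
     c * (lin Y p * lin Y' p) + lam = k * (lin l1 p * lin l2 p)) ->
  [/\ ~~ parallel l1 X, ~~ parallel l2 X &
      meet l1 X + meet l2 X = meet X Y + meet X Y'].
Proof.
move=> hc hY hY' h.
set H := prod_quad Y Y' (dir X); set D := prod_diff Y Y' (base X) (dir X).
set H' := prod_quad l1 l2 (dir X); set D' := prod_diff l1 l2 (base X) (dir X).
have /poly2_eq0 [eH eD _] : forall s, (c * H - k * H') * s ^+ 2 + (c * D - k * D') * s +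
    (c * (lin Y (base X) * lin Y' (base X)) + lam -
     k * (lin l1 (base X) * lin l2 (base X))) = 0.
  move=> s; have := h _ (on_line_param X s); rewrite !prod_line -/H -/D -/H' -/D' => e.
  by apply: (eq_lincomb 1 e); ring.
have hH : H != 0 by rewrite /H prod_quad_dir_eq0 negb_or hY hY'.
have : k * H' != 0.
  have -> : k * H' = c * H by apply: (eq_lincomb (-1) eH); ring.
  by rewrite mulf_neq0.
rewrite mulf_eq0 negb_or => /andP [hk /prod_quad_dir_neq0 [h1 h2]].
rewrite !(parallel_sym _ X) h1 h2 (meetC h1) (meetC h2) !meetE //; split=> //.
have hs : meet_coord X l1 + meet_coord X l2 - (meet_coord X Y + meet_coord X Y') = 0.
  apply/eqP; rewrite subr_eq0 !meet_coord_sum //; apply/eqP.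
  apply/eqP; rewrite eqr_div ?prod_quad_dir_eq0 ?negb_or ?h1 ?h2 ?hY ?hY' //; apply/eqP.
  apply: (mulfI hk); apply: (eq_lincomb H eD); apply: (eq_lincomb (- D) eH).
  by rewrite -/H -/D -/H' -/D'; ring.
apply: injective_projections => /=.
- by apply: (eq_lincomb (l_u X) hs); ring.
- by apply: (eq_lincomb (l_t X) hs); ring.
Qed.

Lemma midpoint_midpoint p q v w :
  midpoint (midpoint p q) (midpoint v w) = 4^-1 *v (p + q + v + w).
Proof.
have h4 : (4 : K) != 0 by rewrite (_ : 4 = 2 * 2) ?mulf_neq0 //; ring.
by rewrite /midpoint /scalev; apply: injective_projections => /=; field; rewrite h4 hK2.
Qed.

Lemma centroidE (A B A' B' : line K) :
  centroid A B A' B' = 4^-1 *v (meet A B + meet B A' + meet A' B' + meet B' A).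
Proof. by rewrite /centroid /scalev /=; congr pair; rewrite mulrC. Qed.

Lemma centroid_midpoints (A B A' B' : line K) :
  centroid A B A' B' =
    midpoint (midpoint (meet A B) (meet B' A)) (midpoint (meet B A') (meet A' B')) /\
  centroid A B A' B' =
    midpoint (midpoint (meet A B) (meet B A')) (midpoint (meet A' B') (meet B' A)).
Proof.
rewrite centroidE !midpoint_midpoint; split=> //; congr (_ *v _).
by rewrite -!addrA; congr (_ + _); rewrite addrA addrC.
Qed.

Lemma crosses_of_nonparallel l X Y : ~~ parallel l X -> ~~ parallel l Y -> crosses l X Y.
Proof.
move=> hX hY; split; [move=> e | move=> e | by case=> pX; rewrite pX in hX].
- by move: hX; rewrite e parallel_refl.
- by move: hY; rewrite e parallel_refl.
Qed.

Lemma bisector_mid_on A B A' B' l m :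
  bisector_mid A B A' B' l (Some m) -> lin l m = 0.
Proof.
have key X Y : mid l X Y = Some m -> lin l m = 0.
  rewrite /mid; case: ifP => // /norP [hX hY] [<-].
  by rewrite lin_midpoint (meet_on hX).1 (meet_on hY).1 addr0 mul0r.
by case=> -[_ /key].
Qed.

Lemma side_midpoints X X' Y Y' l1 l2 c lam k : c != 0 ->
  ~~ parallel X Y -> ~~ parallel X Y' -> ~~ parallel X' Y -> ~~ parallel X' Y' ->
  (forall p, on_line X p \/ on_line X' p ->
     c * (lin Y p * lin Y' p) + lam = k * (lin l1 p * lin l2 p)) ->
  exists m1 m2, [/\ crosses l1 X X' /\ mid l1 X X' = Some m1,
    crosses l2 X X' /\ mid l2 X X' = Some m2 &
    midpoint m1 m2 = 4^-1 *v (meet X Y + meet X Y' + meet X' Y + meet X' Y')].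
Proof.
move=> hc hXY hXY' hX'Y hX'Y' h.
have [p1 p2 s1] := side_meets_sum hc hXY hXY' (fun p hp => h p (or_introl hp)).
have [q1 q2 s2] := side_meets_sum hc hX'Y hX'Y' (fun p hp => h p (or_intror hp)).
exists (midpoint (meet l1 X) (meet l1 X')), (midpoint (meet l2 X) (meet l2 X')).
rewrite /mid (negPf p1) (negPf p2) (negPf q1) (negPf q2) midpoint_midpoint.
split; [by split; first exact: crosses_of_nonparallel..|].
by rewrite -addrA addrACA s1 s2 addrA.
Qed.

(** * The pencil of the quadrilateral *)

Section Pencil.
Variables A B A' B' : line K.
Local Notation conic := (pencil_conic A B A' B').

Definition pencil_quad a b w : K := a * prod_quad A A' w + b * prod_quad B B' w.
Definition pencil_diff a b p w : K := a * prod_diff A A' p w + b * prod_diff B B' p w.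
Definition pencil_polar a b w z : K :=
  a * prod_polar A A' w z + b * prod_polar B B' w z.

Definition pencil_factors a b l1 l2 : Prop :=
  exists lam k, k != 0 /\ forall p, conic a b p + lam = k * (lin l1 p * lin l2 p).

Lemma pencil_conic_line a b p w t :
  conic a b (p + t *v w) =
  pencil_quad a b w * t ^+ 2 + pencil_diff a b p w * t + conic a b p.
Proof. rewrite /pencil_conic !prod_line /pencil_quad /pencil_diff; ring. Qed.

Lemma pencil_conic_coords a b p d e s r :
  conic a b (p + s *v d + r *v e) =
  conic a b p + s * pencil_diff a b p d + r * pencil_diff a b p e +
  s ^+ 2 * pencil_quad a b d + s * r * pencil_polar a b d e + r ^+ 2 * pencil_quad a b e.
Proof.
rewrite /pencil_conic /pencil_diff /pencil_quad /pencil_polar.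
rewrite /prod_diff /prod_quad /prod_polar /lin /lin0 /=; ring.
Qed.

Lemma pencil_quad_coords a b d e s r :
  pencil_quad a b (s *v d + r *v e) =
  s ^+ 2 * pencil_quad a b d + s * r * pencil_polar a b d e + r ^+ 2 * pencil_quad a b e.
Proof. rewrite /pencil_quad /pencil_polar /prod_quad /prod_polar /lin0 /=; ring. Qed.

Lemma pencil_diff_coords a b p d e s r :
  pencil_diff a b p (s *v d + r *v e) = s * pencil_diff a b p d + r * pencil_diff a b p e.
Proof. rewrite /pencil_diff /prod_diff /lin0 /=; ring. Qed.

Lemma pencil_diff_eq0_basis a b p d e : det d e != 0 ->
  pencil_diff a b p d = 0 -> pencil_diff a b p e = 0 -> forall w, pencil_diff a b p w = 0.
Proof.
move=> hde hd he w; have [s [r ->]] := basis_coords w 0 hde.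
by rewrite add0r pencil_diff_coords hd he; ring.
Qed.

Lemma pencil_diff_add a b p w z :
  pencil_diff a b (p + w) z = pencil_diff a b p z + pencil_polar a b w z.
Proof. rewrite /pencil_diff /pencil_polar /prod_diff /prod_polar /lin /lin0 /=; ring. Qed.

Lemma pencil_diff_midpoint a b p q w :
  pencil_diff a b (midpoint p q) w = (pencil_diff a b p w + pencil_diff a b q w) / 2.
Proof. by rewrite /pencil_diff /prod_diff !lin_midpoint; field. Qed.

Lemma pencil_polar_scale a b s w z :
  pencil_polar a b (s *v w) z = s * pencil_polar a b w z.
Proof. rewrite /pencil_polar /prod_polar /lin0 /=; ring. Qed.

Lemma pencil_polarC a b w z : pencil_polar a b w z = pencil_polar a b z w.
Proof. rewrite /pencil_polar /prod_polar; ring. Qed.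

Lemma pencil_polar_diag a b w : pencil_polar a b w w = 2 * pencil_quad a b w.
Proof. rewrite /pencil_polar /pencil_quad /prod_polar /prod_quad; ring. Qed.

Lemma pencil_polarE a b w z :
  pencil_polar a b w z = pencil_quad a b (w + z) - pencil_quad a b w - pencil_quad a b z.
Proof. rewrite /pencil_polar /pencil_quad /prod_polar /prod_quad !lin0_add; ring. Qed.

(* The conic of the pencil whose quadratic part vanishes on d: this is how the
   form <., .>_Q enters. *)
Lemma pencil_quad_qform d e :
  pencil_quad (prod_quad B B' d) (- prod_quad A A' d) e = det d e * qform A B A' B' d e.
Proof.
rewrite /pencil_quad /prod_quad /lin0 /det /qform /qalpha /qbeta /qgamma; ring.
Qed.

Lemma pencil_polar_qform d w :
  pencil_polar (prod_quad B B' d) (- prod_quad A A' d) d w = det d w * qform A B A' B' d d.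
Proof.
rewrite /pencil_polar /prod_quad /prod_polar /lin0 /det /qform /qalpha /qbeta /qgamma; ring.
Qed.

Lemma pencil_coefs_of_vanish a b l lam :
  (forall p, on_line l p -> conic a b p + lam = 0) ->
  [/\ pencil_quad a b (dir l) = 0, pencil_diff a b (base l) (dir l) = 0
    & conic a b (base l) + lam = 0].
Proof.
move=> h; apply: poly2_eq0 => s; have := h _ (on_line_param l s).
by rewrite pencil_conic_line => e; apply: (eq_lincomb 1 e); ring.
Qed.

Lemma pencil_coefs_of_factors a b l1 l2 lam k :
  (forall p, conic a b p + lam = k * (lin l1 p * lin l2 p)) ->
  (forall w, pencil_quad a b w = k * prod_quad l1 l2 w) /\
  (forall p w, pencil_diff a b p w = k * prod_diff l1 l2 p w).
Proof.
move=> h; suff coefs p w : pencil_quad a b w = k * prod_quad l1 l2 w /\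
    pencil_diff a b p w = k * prod_diff l1 l2 p w.
  by split=> [w|p w]; [case: (coefs 0 w) | case: (coefs p w)].
have /poly2_eq0 [e2 e1 _] : forall t,
    (pencil_quad a b w - k * prod_quad l1 l2 w) * t ^+ 2 +
    (pencil_diff a b p w - k * prod_diff l1 l2 p w) * t +
    (conic a b p + lam - k * (lin l1 p * lin l2 p)) = 0.
  move=> t; have := h (p + t *v w); rewrite pencil_conic_line prod_line => e.
  by apply: (eq_lincomb 1 e); ring.
by split; [apply: (eq_lincomb 1 e2) | apply: (eq_lincomb 1 e1)]; ring.
Qed.

Lemma degeneration_of_factors a b l1 l2 :
  pencil_factors a b l1 l2 -> degeneration (conic a b) l1 l2.
Proof.
case=> lam [k [hk h]]; exists lam => p; rewrite h; split.
- by move/eqP; rewrite mulf_eq0 (negPf hk) /= mulf_eq0 => /orP [] /eqP hl; [left|right].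
- case=> hp; [have hl : lin l1 p = 0 := hp | have hl : lin l2 p = 0 := hp].
  all: by rewrite hl; ring.
Qed.

Hypotheses (nAB : ~~ parallel A B) (nBA' : ~~ parallel B A')
  (nA'B' : ~~ parallel A' B') (nB'A : ~~ parallel B' A).

Let nBA : ~~ parallel B A. Proof. by rewrite parallel_sym. Qed.
Let nA'B : ~~ parallel A' B. Proof. by rewrite parallel_sym. Qed.
Let nB'A' : ~~ parallel B' A'. Proof. by rewrite parallel_sym. Qed.
Let nAB' : ~~ parallel A B'. Proof. by rewrite parallel_sym. Qed.

Lemma prod_quad_sides l :
  prod_quad A A' (dir l) != 0 \/ prod_quad B B' (dir l) != 0.
Proof.
have [hA|] := eqVneq (prod_quad A A' (dir l)) 0; last by left.
right; apply/negP; move/eqP: hA; rewrite /prod_quad !mulf_eq0.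
by case/orP=> /eqP hX /orP [] /eqP hY; [move: nAB | move: nAB' | move: nA'B | move: nA'B'];
  rewrite (parallel_of_lin0 hX hY).
Qed.

Lemma pencil_quad_eq0 a b : (forall w, pencil_quad a b w = 0) -> a = 0 /\ b = 0.
Proof.
move=> h.
have /eqP : b * prod_quad B B' (dir A) = 0.
  by rewrite -(h (dir A)) /pencil_quad /prod_quad lin0_dir; ring.
rewrite mulf_eq0 prod_quad_dir_eq0 (negPf nAB) (negPf nAB') !orbF => /eqP b0.
have /eqP : a * prod_quad A A' (dir B) = 0.
  by rewrite -(h (dir B)) /pencil_quad /prod_quad lin0_dir; ring.
by rewrite mulf_eq0 prod_quad_dir_eq0 (negPf nBA) (negPf nBA') !orbF => /eqP a0; split.
Qed.

Lemma pencil_quad_basis a b d e : a != 0 \/ b != 0 -> det d e != 0 ->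
  pencil_quad a b d = 0 -> pencil_polar a b d e != 0 \/ pencil_quad a b e != 0.
Proof.
move=> hab hde hd; have [hp|] := eqVneq (pencil_polar a b d e) 0; last by left.
right; apply/eqP => he; have [a0 b0] : a = 0 /\ b = 0.
  apply: pencil_quad_eq0 => w; have [s [r ->]] := basis_coords w 0 hde.
  by rewrite add0r pencil_quad_coords hd hp he; ring.
by case: hab; rewrite ?a0 ?b0 eqxx.
Qed.

Lemma bisects_pencil a b l : a != 0 \/ b != 0 -> pencil_quad a b (dir l) = 0 ->
  bisects A B A' B' l <-> pencil_diff a b (base l) (dir l) = 0.
Proof.
move=> hab hq; have [c hc [-> ->]] := dot0_proportional hab (prod_quad_sides l) hq.
rewrite bisectsP /pencil_diff; split=> [e | /eqP]; first by apply: (eq_lincomb (- c) e); ring.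
have -> : forall x y u v : K, c * y * u + - (c * x) * v = c * (y * u - x * v).
  by move=> *; ring.
by rewrite mulf_eq0 (negPf hc) subr_eq0 => /eqP ->.
Qed.

Lemma Q_orthogonal_of_pencil a b l1 l2 : a != 0 \/ b != 0 ->
  pencil_quad a b (dir l1) = 0 -> pencil_quad a b (dir l2) = 0 ->
  (parallel l1 l2 -> pencil_polar a b (dir l1) (transv l1) = 0) ->
  Q_orthogonal A B A' B' l1 l2.
Proof.
move=> hab h1 h2 hpol.
have [c hc [ea eb]] := dot0_proportional hab (prod_quad_sides l1) h1.
change (qform A B A' B' (dir l1) (dir l2) = 0).
case: (boolP (parallel l1 l2)) => hp.
- move: (hpol hp); rewrite (parallel_dir hp) ea eb.
  have -> : forall x y w z,
      pencil_polar (c * y) (- (c * x)) w z = c * pencil_polar y (- x) w z.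
    by move=> *; rewrite /pencil_polar; ring.
  rewrite pencil_polar_qform => /eqP.
  by rewrite !mulf_eq0 (negPf hc) (negPf (det_dir_transv l1)) => /eqP.
- move: h2; rewrite ea eb.
  have -> : forall x y w, pencil_quad (c * y) (- (c * x)) w = c * pencil_quad y (- x) w.
    by move=> *; rewrite /pencil_quad; ring.
  rewrite pencil_quad_qform => /eqP; rewrite !mulf_eq0 (negPf hc) det_dir oppr_eq0.
  by rewrite -parallelE parallel_sym (negPf hp) => /eqP.
Qed.

Lemma pencil_diff_shift a b l p s :
  pencil_quad a b (dir l) = 0 -> pencil_diff a b p (dir l) = 0 ->
  pencil_diff a b (p + s *v dir l) (dir l) = 0.
Proof.
by move=> hq hd; rewrite pencil_diff_add pencil_polar_scale pencil_polar_diag hq hd; ring.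
Qed.

Lemma factors_crossing a b l1 l2 : a != 0 \/ b != 0 -> ~~ parallel l1 l2 ->
  pencil_quad a b (dir l1) = 0 -> pencil_diff a b (base l1) (dir l1) = 0 ->
  pencil_quad a b (dir l2) = 0 -> pencil_diff a b (base l2) (dir l2) = 0 ->
  pencil_factors a b l1 l2.
Proof.
move=> hab hp hq1 hd1 hq2 hd2; have [X1 X2] := meet_on hp.
have hc1 : pencil_diff a b (meet l1 l2) (dir l1) = 0.
  by case/on_lineP: X1 => s ->; apply: pencil_diff_shift.
have hc2 : pencil_diff a b (meet l1 l2) (dir l2) = 0.
  by case/on_lineP: X2 => s ->; apply: pencil_diff_shift.
have m1 : lin0 l1 (dir l2) != 0 by rewrite -parallelE parallel_sym.
have m2 : lin0 l2 (dir l1) != 0 by rewrite -parallelE.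
have hdet : det (dir l1) (dir l2) != 0 by rewrite det_dir oppr_eq0.
have hk : pencil_polar a b (dir l1) (dir l2) != 0.
  by case: (pencil_quad_basis hab hdet hq1) => //; rewrite hq2 eqxx.
exists (- conic a b (meet l1 l2)),
  (pencil_polar a b (dir l1) (dir l2) / (lin0 l1 (dir l2) * lin0 l2 (dir l1))).
split; first by rewrite mulf_neq0 // invr_eq0 mulf_neq0.
move=> p; have [s [r ->]] := basis_coords p (meet l1 l2) hdet.
rewrite pencil_conic_coords hc1 hc2 hq1 hq2 !lin_coords X1 X2 !lin0_dir.
by field; rewrite m1 m2.
Qed.

Lemma factors_parallel a b l1 l2 : a != 0 \/ b != 0 -> parallel l1 l2 ->
  pencil_quad a b (dir l1) = 0 -> pencil_diff a b (base l1) (dir l1) = 0 ->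
  pencil_polar a b (dir l1) (transv l1) = 0 ->
  lin0 l1 (transv l1) * pencil_diff a b (base l1) (transv l1) =
    (l_v l2 - l_v l1) * pencil_quad a b (transv l1) ->
  pencil_factors a b l1 l2.
Proof.
move=> hab hp hq hd hpol hrel; have hm := lin0_transv l1.
have hn : pencil_quad a b (transv l1) != 0.
  by case: (pencil_quad_basis hab (det_dir_transv l1) hq) => //; rewrite hpol eqxx.
exists (- conic a b (base l1)), (pencil_quad a b (transv l1) / lin0 l1 (transv l1) ^+ 2).
split; first by rewrite mulf_neq0 ?invr_eq0 ?expf_neq0.
move=> p; have [s [r ->]] := basis_coords p (base l1) (det_dir_transv l1).
rewrite (parallel_lin _ hp) pencil_conic_coords hq hd hpol !lin_coords lin_base lin0_dir.
by apply: (eq_lincomb (r / lin0 l1 (transv l1)) hrel); field.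
Qed.

Lemma factors_of_degeneration a b l1 l2 : a != 0 \/ b != 0 ->
  degeneration (conic a b) l1 l2 -> pencil_factors a b l1 l2.
Proof.
move=> hab [lam hz].
have [hq1 hd1 hc1] := pencil_coefs_of_vanish (fun p hp => proj2 (hz p) (or_introl hp)).
have [hq2 hd2 _] := pencil_coefs_of_vanish (fun p hp => proj2 (hz p) (or_intror hp)).
case: (boolP (parallel l1 l2)) => hp; last exact: factors_crossing.
suff [hpol hrel] : pencil_polar a b (dir l1) (transv l1) = 0 /\
    lin0 l1 (transv l1) * pencil_diff a b (base l1) (transv l1) =
    (l_v l2 - l_v l1) * pencil_quad a b (transv l1) by exact: factors_parallel.
apply: (line_pair_roots (lin0_transv l1)).
  exact: pencil_quad_basis hab (det_dir_transv l1) hq1.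
move=> s r; set p := base l1 + s *v dir l1 + r *v transv l1.
have e1 : conic a b p + lam = r * pencil_diff a b (base l1) (transv l1) +
    s * r * pencil_polar a b (dir l1) (transv l1) + r ^+ 2 * pencil_quad a b (transv l1).
  by rewrite pencil_conic_coords hq1 hd1; apply: (eq_lincomb 1 hc1); ring.
have e2 : lin l1 p = r * lin0 l1 (transv l1).
  by rewrite lin_coords lin_base lin0_dir; ring.
have e3 : lin l2 p = r * lin0 l1 (transv l1) + (l_v l2 - l_v l1).
  by rewrite (parallel_lin _ hp) e2.
by rewrite -e1 -e3 -e2; exact: hz.
Qed.

(* The midpoint of the two vertices on a side is the midpoint of the chord cut
   by the opposite pair, so the derivative of G there vanishes along the side. *)
Lemma pencil_diff_centroid a b l : (forall p, pencil_diff a b p (dir l) = 0) ->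
  forall w, pencil_diff a b (centroid A B A' B') w = 0.
Proof.
move=> hl; have [hcA hcB] := centroid_midpoints A B A' B'.
have [A1 B1] := meet_on nAB; have [B2 A2] := meet_on nBA'.
have [A3 B3] := meet_on nA'B'; have [B4 A4] := meet_on nB'A.
have on_mid X v w : lin X v = 0 -> lin X w = 0 -> lin X (midpoint v w) = 0.
  by move=> hv hw; rewrite lin_midpoint hv hw addr0 mul0r.
have side M X : lin0 X (dir l) != 0 -> pencil_diff a b M (dir X) = 0 ->
    forall w, pencil_diff a b M w = 0.
  by move=> hX hM; apply: (pencil_diff_eq0_basis _ (hl M) hM); rewrite -lin0E.
have [/andP [hA hA'] | hAA] :=
  boolP ((lin0 A (dir l) != 0) && (lin0 A' (dir l) != 0)).
- have M1 : forall w, pencil_diff a b (midpoint (meet A B) (meet B' A)) w = 0.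
    apply: (side _ A hA); rewrite /pencil_diff prod_diff_on ?on_mid //.
    by rewrite (prod_diff_chord_midpoint A1) //; ring.
  have M2 : forall w, pencil_diff a b (midpoint (meet B A') (meet A' B')) w = 0.
    apply: (side _ A' hA'); rewrite /pencil_diff prod_diffC prod_diff_on ?on_mid //.
    by rewrite (prod_diff_chord_midpoint A2) //; ring.
  by move=> w; rewrite hcA pencil_diff_midpoint M1 M2 addr0 mul0r.
- have hY Y : ~~ parallel A Y -> ~~ parallel A' Y -> lin0 Y (dir l) != 0.
    move=> nAY nA'Y; apply/eqP => hY; move: hAA; rewrite negb_and !negbK.
    case/orP=> /eqP hX; [move: nAY | move: nA'Y]; by rewrite (parallel_of_lin0 hX hY).
  have M1 : forall w, pencil_diff a b (midpoint (meet A B) (meet B A')) w = 0.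
    apply: (side _ B (hY _ nAB nA'B)); rewrite /pencil_diff (prod_diff_on B') ?on_mid //.
    by rewrite (prod_diff_chord_midpoint B1) //; ring.
  have M2 : forall w, pencil_diff a b (midpoint (meet A' B') (meet B' A)) w = 0.
    apply: (side _ B' (hY _ nAB' nA'B')).
    rewrite /pencil_diff (prod_diffC B) prod_diff_on ?on_mid //.
    by rewrite prod_diffC (prod_diff_chord_midpoint B3 B4) //; ring.
  by move=> w; rewrite hcB pencil_diff_midpoint M1 M2 addr0 mul0r.
Qed.

Lemma antipodal_of_factors a b l1 l2 lam k : a != 0 \/ b != 0 ->
  bisects A B A' B' l1 -> bisects A B A' B' l2 ->
  (forall p, conic a b p + lam = k * (lin l1 p * lin l2 p)) ->
  Q_antipodal A B A' B' l1 l2.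
Proof.
move=> hab hb1 hb2 hf; split=> //; split=> //.
have [b0|hb] := eqVneq b 0.
- have ha : a != 0 by case: hab => //; rewrite b0 eqxx.
  have hB : forall p, on_line B p \/ on_line B' p ->
      a * (lin A p * lin A' p) + lam = k * (lin l1 p * lin l2 p).
    move=> p [] hp; [have hl : lin B p = 0 := hp | have hl : lin B' p = 0 := hp];
    by apply: (eq_lincomb 1 (hf p)); rewrite /pencil_conic hl b0; ring.
  have [m1 [m2 [h1 h2 hm]]] := side_midpoints ha nBA nBA' nB'A nB'A' hB.
  exists m1, m2; split; [by right | by right | ].
  by rewrite hm centroidE (meetC nAB) (meetC nA'B') addrAC.
- have hA : forall p, on_line A p \/ on_line A' p ->
      b * (lin B p * lin B' p) + lam = k * (lin l1 p * lin l2 p).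
    move=> p [] hp; [have hl : lin A p = 0 := hp | have hl : lin A' p = 0 := hp];
    by apply: (eq_lincomb 1 (hf p)); rewrite /pencil_conic hl; ring.
  have [m1 [m2 [h1 h2 hm]]] := side_midpoints hb nAB nAB' nA'B nA'B' hA.
  exists m1, m2; split; [by left | by left | ].
  rewrite hm centroidE (meetC nB'A) (meetC nBA'); congr (_ *v _).
  by rewrite -!addrA; congr (_ + _); rewrite addrC -addrA.
Qed.

Lemma Q_pair_of_factors a b l1 l2 : a != 0 \/ b != 0 ->
  pencil_factors a b l1 l2 -> Q_pair A B A' B' l1 l2.
Proof.
move=> hab [lam [k [hk hf]]]; have [hq hd] := pencil_coefs_of_factors hf.
have hq1 : pencil_quad a b (dir l1) = 0 by rewrite hq /prod_quad lin0_dir mul0r mulr0.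
have hq2 : pencil_quad a b (dir l2) = 0 by rewrite hq /prod_quad lin0_dir !mulr0.
have hb1 : bisects A B A' B' l1.
  by apply/(bisects_pencil hab hq1); rewrite hd /prod_diff lin_base lin0_dir; ring.
have hb2 : bisects A B A' B' l2.
  by apply/(bisects_pencil hab hq2); rewrite hd /prod_diff lin_base lin0_dir; ring.
split; first exact: antipodal_of_factors hab hb1 hb2 hf.
apply: Q_orthogonal_of_pencil hab hq1 hq2 _; rewrite parallelE => /eqP h21.
by rewrite pencil_polarE !hq /prod_quad !lin0_add lin0_dir h21; ring.
Qed.

Lemma pencil_diff_transv_of_antipodal a b l1 l2 m1 m2 : parallel l1 l2 ->
  pencil_diff a b (base l1) (dir l1) = 0 ->
  (forall w, pencil_polar a b (dir l1) w = 0) ->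
  bisector_mid A B A' B' l1 (Some m1) -> bisector_mid A B A' B' l2 (Some m2) ->
  midpoint m1 m2 = centroid A B A' B' ->
  lin0 l1 (transv l1) * pencil_diff a b (base l1) (transv l1) =
    (l_v l2 - l_v l1) * pencil_quad a b (transv l1).
Proof.
move=> hp hd hpol hm1 hm2 hmid.
have hc : forall w, pencil_diff a b (centroid A B A' B') w = 0.
  apply: (pencil_diff_centroid (l := l1)) => p.
  by rewrite -(subrK (base l1) p) addrC pencil_diff_add hd pencil_polarC hpol addr0.
have [s [r hcr]] := basis_coords (centroid A B A' B') (base l1) (det_dir_transv l1).
(* Antipodality puts the centroid midway between l1 and l2. *)
have hL : 2 * (r * lin0 l1 (transv l1)) = - (l_v l2 - l_v l1).
  have e2 : lin l1 m2 = - (l_v l2 - l_v l1).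
    by apply: (eq_lincomb (-1) (parallel_lin m2 hp)); rewrite (bisector_mid_on hm2); ring.
  have := lin_midpoint l1 m1 m2.
  rewrite hmid (bisector_mid_on hm1) e2 hcr lin_coords lin_base lin0_dir => e.
  by apply: (eq_lincomb 2 e); field.
have := hc (transv l1).
rewrite hcr !pencil_diff_add !pencil_polar_scale hpol pencil_polar_diag => e.
apply: (eq_lincomb (lin0 l1 (transv l1)) e).
by apply: (eq_lincomb (- pencil_quad a b (transv l1)) hL); ring.
Qed.

Lemma factors_of_Q_pair a b l1 l2 : a != 0 \/ b != 0 ->
  (forall e, pencil_quad a b e = det (dir l1) e * qform A B A' B' (dir l1) e) ->
  (forall w, pencil_polar a b (dir l1) w =
     det (dir l1) w * qform A B A' B' (dir l1) (dir l1)) ->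
  Q_pair A B A' B' l1 l2 -> pencil_factors a b l1 l2.
Proof.
move=> hab hq hpol [[hb1 [hb2 [m1 [m2 [hm1 hm2 hmid]]]]] horth].
have horth' : qform A B A' B' (dir l1) (dir l2) = 0 := horth.
have hq1 : pencil_quad a b (dir l1) = 0 by rewrite hq det_self mul0r.
have hq2 : pencil_quad a b (dir l2) = 0 by rewrite hq horth' mulr0.
have hd1 := (bisects_pencil hab hq1).1 hb1.
have hd2 := (bisects_pencil hab hq2).1 hb2.
have [hp|hp] := boolP (parallel l1 l2); last exact: factors_crossing.
have hqq : qform A B A' B' (dir l1) (dir l1) = 0 by rewrite -{2}(parallel_dir hp).
have hpol0 w : pencil_polar a b (dir l1) w = 0 by rewrite hpol hqq mulr0.
apply: factors_parallel => //.
exact: pencil_diff_transv_of_antipodal hp hd1 hpol0 hm1 hm2 hmid.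
Qed.

Lemma Q_pair_iff_degeneration l1 l2 :
  Q_pair A B A' B' l1 l2 <->
  exists a b, (a != 0 \/ b != 0) /\ degeneration (conic a b) l1 l2.
Proof.
split=> [hQ | [a [b [hab /(factors_of_degeneration hab)]]]]; last exact: Q_pair_of_factors.
pose a := prod_quad B B' (dir l1); pose b := - prod_quad A A' (dir l1).
have hab : a != 0 \/ b != 0.
  by case: (prod_quad_sides l1) => h; [right; rewrite oppr_eq0 | left].
exists a, b; split=> //; apply: degeneration_of_factors.
exact: factors_of_Q_pair hab (pencil_quad_qform _) (pencil_polar_qform _) hQ.
Qed.

End Pencil.
End Geometry.

Unset Implicit Arguments.

Theorem theorem6p4 (K : fieldType) (hK : (2 : K) != 0)
    (A B A' B' : line K) (hQ : quadrilateral A B A' B') (l1 l2 : line K) :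
  Q_pair A B A' B' l1 l2 <->
  exists a b : K, (a != 0 \/ b != 0) /\
    degeneration (pencil_conic A B A' B' a b) l1 l2.
Proof.
case: hQ => _ [_ [_ [nAB nBA' nA'B' nB'A]]].
by apply: Q_pair_iff_degeneration => //; apply/negP.
Qed.
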